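(* For every integer $n\geq 1$, $$\sum_{k=1}^{n}E_{2k-2}E_{2n-2k}=\frac2n\sum_{k=1}^{n}\frac{B_{2k}B_{2n-2k}}{k}\big(2^{2k}-1\big)2^{2k-1}\big(1-2^{2n-2k-1}\big)\binom{2n}{2k}.$$
   Context: $B_n$ denotes the Bernoulli numbers, defined by $\frac{x}{e^x-1}=\sum_{n\ge 0}B_n\frac{x^n}{n!}$ (so $B_0=1$). $E_n$ denotes the Euler numbers, defined by $\operatorname{sech} x=\sum_{n\ge0}E_n\frac{x^n}{n!}$ (so $E_0=1$, $E_2=-1$, $E_4=5,\dots$). *)

From mathcomp Require Import all_boot all_order all_algebra.
Set Implicit Arguments. Unset Strict Implicit. Unset Printing Implicit Defensive.
Import Order.TTheory GRing.Theory Num.Theory.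
Local Open Scope ring_scope.

(* Bernoulli numbers, x/(e^x-1) = sum B_n x^n/n!.  Equivalently, as formal
   power series, ((e^x-1)/x) * (sum_n B_n x^n/n!) = 1, i.e. for every n
     sum_{k=0}^n B_k/k! * 1/(n-k+1)! = [n == 0]. *)
Fixpoint bern_seq (n : nat) : seq rat :=
  if n is n'.+1 then
    let s := bern_seq n' in
    rcons s (- (n`!)%:R * \sum_(k < n) s`_k / (k`!)%:R / ((n - k).+1`!)%:R)
  else [:: 1].

Definition bernoulli (n : nat) : rat := (bern_seq n)`_n.

(* Euler numbers, sech x = sum E_n x^n/n!, i.e. cosh x * (sum E_n x^n/n!) = 1:
   for every n,  sum_{k=0}^n E_k/k! * c_{n-k} = [n == 0]  where
   c_j = 1/j! if j is even and 0 otherwise (coefficients of cosh). *)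
Definition cosh_coef (j : nat) : rat := if odd j then 0 else 1 / (j`!)%:R.

Fixpoint euler_seq (n : nat) : seq rat :=
  if n is n'.+1 then
    let s := euler_seq n' in
    rcons s (- (n`!)%:R * \sum_(k < n) s`_k / (k`!)%:R * cosh_coef (n - k))
  else [:: 1].

Definition euler (n : nat) : rat := (euler_seq n)`_n.

(* Let J(f, g)(x) = \int_0^x f(t) g(x - t) dt.  Multiplying by an exponential
   distributes over J: e^(ax) J(f, g) = J(e^(ax) f, e^(ax) g).  For f = sech x,
   the generating function of the Euler numbers, e^(+-x) sech x = 1 +- tanh x,
   so subtracting the two instances leaves only the cross terms:
     sinh x * J(sech, sech) = 2 \int_0^x tanh.
   The coefficients of J(sech, sech) are the Euler convolutions
   sum_i E_i E_(m-i) / (m+1)!.  With B(x) = x / (e^x - 1) one has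
   x / sinh x = 2 B(x) - B(2x) and x tanh x = B(4x) - B(2x) + x, so dividing by
   sinh x expresses these convolutions through Bernoulli numbers; only even
   coefficients of x / sinh x and odd ones of tanh x survive. *)

From mathcomp Require Import all_boot all_order all_algebra zify ring.
From Stdlib Require Import Ring FunctionalExtensionality.
Import GRing.Theory Num.Theory.
Local Open Scope ring_scope.

(** * Formal power series over the rationals *)

Definition fps := nat -> rat.

Definition fps0 : fps := fun=> 0.
Definition fps1 : fps := fun n => (n == 0)%:R.
Definition fps_add (f g : fps) : fps := fun n => f n + g n.
Definition fps_opp (f : fps) : fps := fun n => - f n.
Definition fps_sub (f g : fps) : fps := fun n => f n - g n.
Definition fps_mul (f g : fps) : fps := fun n => \sum_(i < n.+1) f i * g (n - i)%N.

Declare Scope fps_scope.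
Delimit Scope fps_scope with fps.
Notation "0" := fps0 : fps_scope.
Notation "1" := fps1 : fps_scope.
Notation "f + g" := (fps_add f g) : fps_scope.
Notation "- f" := (fps_opp f) : fps_scope.
Notation "f - g" := (fps_sub f g) : fps_scope.
Notation "f * g" := (fps_mul f g) : fps_scope.

Lemma fpsP (f g : fps) : (forall n, f n = g n) -> f = g.
Proof. exact: functional_extensionality. Qed.

(* Coefficients of a product up to degree [N - 1] are those of a product of
   polynomials, which transports the ring laws from [{poly rat}]. *)
Definition fps_trunc (N : nat) (f : fps) : {poly rat} := \poly_(i < N) f i.

Lemma coef_fps_mul_trunc f g {N n} :
  (n < N)%N -> (f * g)%fps n = (fps_trunc N f * fps_trunc N g)`_n.
Proof.
move=> ltnN; rewrite coefM; apply: eq_bigr => i _; rewrite !coef_poly.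
by rewrite ifT ?ifT //; have := ltn_ord i; lia.
Qed.

Lemma coefM_eql {p p' : {poly rat}} (q : {poly rat}) {n : nat} :
  (forall i, (i <= n)%N -> p`_i = p'`_i) -> (p * q)`_n = (p' * q)`_n.
Proof.
by move=> eq_pp'; rewrite !coefM; apply: eq_bigr => i _; rewrite eq_pp' // -ltnS.
Qed.

Lemma coefM_eqr {p p' : {poly rat}} (q : {poly rat}) {n : nat} :
  (forall i, (i <= n)%N -> p`_i = p'`_i) -> (q * p)`_n = (q * p')`_n.
Proof. by move=> eq_pp'; rewrite mulrC (coefM_eql q eq_pp') mulrC. Qed.

Lemma coef_trunc_fps_mul f g {N i} :
  (i < N)%N -> (fps_trunc N (f * g)%fps)`_i = (fps_trunc N f * fps_trunc N g)`_i.
Proof. by move=> ltiN; rewrite coef_poly ltiN (coef_fps_mul_trunc f g ltiN). Qed.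

Lemma fps_mulA f g h : (f * (g * h) = f * g * h)%fps.
Proof.
apply: fpsP => n.
rewrite (coef_fps_mul_trunc f _ (ltnSn n)) (coef_fps_mul_trunc _ h (ltnSn n)).
rewrite (coefM_eqr _ (p := fps_trunc n.+1 (g * h)%fps)
                     (p' := fps_trunc n.+1 g * fps_trunc n.+1 h)); last first.
  by move=> i lein; apply: coef_trunc_fps_mul.
rewrite (coefM_eql _ (p := fps_trunc n.+1 (f * g)%fps)
                     (p' := fps_trunc n.+1 f * fps_trunc n.+1 g)) ?mulrA //.
by move=> i lein; apply: coef_trunc_fps_mul.
Qed.

Lemma fps_mulC f g : (f * g = g * f)%fps.
Proof.
by apply: fpsP => n; rewrite !(coef_fps_mul_trunc _ _ (ltnSn n)) mulrC.
Qed.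

Lemma fps_trunc1 N : (0 < N)%N -> fps_trunc N 1%fps = 1.
Proof.
move=> N_gt0; apply/polyP => -[|i]; rewrite coef_poly coef1 /=; first by rewrite N_gt0.
by case: ifP.
Qed.

Lemma fps_mul1 f : (1 * f)%fps = f.
Proof.
apply: fpsP => n.
by rewrite (coef_fps_mul_trunc _ f (ltnSn n)) fps_trunc1 // mul1r coef_poly ltnSn.
Qed.

Lemma fps_truncD N f g : fps_trunc N (f + g)%fps = fps_trunc N f + fps_trunc N g.
Proof. by apply/polyP => i; rewrite coefD !coef_poly; case: ifP; rewrite ?addr0. Qed.

Lemma fps_mulDl f g h : ((f + g) * h = f * h + g * h)%fps.
Proof.
apply: fpsP => n; rewrite /fps_add !(coef_fps_mul_trunc _ h (ltnSn n)).
by rewrite fps_truncD mulrDl coefD.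
Qed.

Lemma fps_ring_theory :
  ring_theory fps0 fps1 fps_add fps_mul fps_sub fps_opp (@eq fps).
Proof.
constructor=> //.
- by move=> f; apply: fpsP => n; rewrite /fps_add add0r.
- by move=> f g; apply: fpsP => n; rewrite /fps_add addrC.
- by move=> f g h; apply: fpsP => n; rewrite /fps_add addrA.
- exact: fps_mul1.
- exact: fps_mulC.
- exact: fps_mulA.
- exact: fps_mulDl.
- by move=> f; apply: fpsP => n; rewrite /fps_add /fps_opp subrr.
Qed.

Add Ring fps_ring : fps_ring_theory.

Definition fpsC (c : rat) : fps := fun n => if n == 0%N then c else 0.
Definition fpsX : fps := fun n => (n == 1%N)%:R.
Definition fps_deriv (f : fps) : fps := fun n => f n.+1 * n.+1%:R.
Definition fps_scale (a : rat) (f : fps) : fps := fun n => a ^+ n * f n.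
Definition egf (a : nat -> rat) : fps := fun n => a n / n`!%:R.
Definition fps_exp (a : rat) : fps := egf (fun n => a ^+ n).

Lemma natr_fact_neq0 n : (n`!%:R : rat) != 0.
Proof. by rewrite pnatr_eq0 -lt0n fact_gt0. Qed.

Lemma coef_fpsCM c f n : (fpsC c * f)%fps n = c * f n.
Proof.
rewrite /fps_mul big_ord_recl /= subn0 big1 ?addr0 // => i _.
by rewrite /fpsC /= mul0r.
Qed.

Lemma coef_fpsMC c f n : (f * fpsC c)%fps n = f n * c.
Proof. by rewrite fps_mulC coef_fpsCM mulrC. Qed.

Lemma coef_fpsXM f n : (fpsX * f)%fps n = if n is m.+1 then f m else 0.
Proof.
case: n => [|m]; first by rewrite /fps_mul big_ord1 /fpsX mul0r.
rewrite /fps_mul !big_ord_recl /fpsX /= mul0r add0r mul1r subSS subn0.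
by rewrite big1 ?addr0 // => i _; rewrite mul0r.
Qed.

Lemma coef_fps_mul0 f g : (f * g)%fps 0%N = f 0%N * g 0%N.
Proof. by rewrite /fps_mul big_ord1. Qed.

Lemma fpsC1 : fpsC 1 = 1%fps.
Proof. by apply: fpsP => -[|n]. Qed.

Lemma fpsCD a b : fpsC (a + b) = (fpsC a + fpsC b)%fps.
Proof. by apply: fpsP => -[|n]; rewrite /fpsC /fps_add //= addr0. Qed.

Lemma fpsCM a b : fpsC (a * b) = (fpsC a * fpsC b)%fps.
Proof. by apply: fpsP => n; rewrite coef_fpsCM /fpsC; case: (n == 0%N); rewrite ?mulr0. Qed.

Lemma fpsC2 : fpsC 2 = (1 + 1)%fps.
Proof. by rewrite -fpsC1 -fpsCD. Qed.

Lemma fps_mulXI : injective (fps_mul fpsX).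
Proof.
move=> f g eq_Xf; apply: fpsP => n.
by have := congr1 (fun h => h n.+1) eq_Xf; rewrite /= !coef_fpsXM.
Qed.

Lemma fps_mul2I : injective (fps_mul (1 + 1)%fps).
Proof.
rewrite -fpsC2 => f g eq_2f; apply: fpsP => n.
have := congr1 (fun h => h n) eq_2f; rewrite /= !coef_fpsCM.
exact/mulfI.
Qed.

Lemma fps_unit_mulI {u v : fps} : (u * v)%fps = 1%fps -> injective (fps_mul u).
Proof.
move=> uv1 f g eq_uf.
by rewrite -[f]fps_mul1 -[g]fps_mul1 -uv1 ![(u * v)%fps]fps_mulC -!fps_mulA eq_uf.
Qed.

Lemma coef_fps_deriv_trunc f {N n} :
  (n.+1 < N)%N -> fps_deriv f n = (deriv (fps_trunc N f))`_n.
Proof. by move=> ltnN; rewrite coef_deriv coef_poly ltnN /fps_deriv mulr_natr. Qed.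

Lemma fps_derivM f g :
  fps_deriv (f * g)%fps = (fps_deriv f * g + f * fps_deriv g)%fps.
Proof.
apply: fpsP => n; rewrite /fps_add.
have trunc_deriv h i : (i <= n)%N ->
    (fps_trunc n.+2 (fps_deriv h))`_i = (deriv (fps_trunc n.+2 h))`_i.
  by move=> lein; rewrite coef_poly ifT -?(coef_fps_deriv_trunc h (N := n.+2)) //; lia.
rewrite (coef_fps_deriv_trunc _ (ltnSn n.+1)) coef_deriv coef_poly ltnSn.
rewrite (coef_fps_mul_trunc f g (ltnSn n.+1)) -coef_deriv derivM coefD.
rewrite !(coef_fps_mul_trunc _ _ (ltnW (ltnSn n.+1))).
by rewrite (coefM_eql _ (trunc_deriv f)) (coefM_eqr _ (trunc_deriv g)).
Qed.

Lemma fps_deriv_exp a : fps_deriv (fps_exp a) = (fpsC a * fps_exp a)%fps.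
Proof.
apply: fpsP => n; rewrite coef_fpsCM /fps_deriv /fps_exp /egf factS natrM exprS.
have := natr_fact_neq0 n; have : (n.+1%:R : rat) != 0 by rewrite pnatr_eq0.
move: (n.+1%:R) (n`!%:R) => x y x_neq0 y_neq0.
by field; apply/andP.
Qed.

Lemma coef_fps_exp0 a : fps_exp a 0%N = 1.
Proof. by rewrite /fps_exp /egf expr0 fact0 divr1. Qed.

Lemma fps_deriv_eq_uniq a f g :
  fps_deriv f = (fpsC a * f)%fps -> fps_deriv g = (fpsC a * g)%fps ->
  f 0%N = g 0%N -> f = g.
Proof.
move=> f'E g'E fg0; apply: fpsP; elim=> // n IHn.
have := congr1 (fun h => h n) f'E; have := congr1 (fun h => h n) g'E.
rewrite /= !coef_fpsCM /fps_deriv -IHn => <- /(mulIf _); apply.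
by rewrite pnatr_eq0.
Qed.

Lemma fps_expD a b : fps_exp (a + b) = (fps_exp a * fps_exp b)%fps.
Proof.
apply: (fps_deriv_eq_uniq (a + b)).
- exact: fps_deriv_exp.
- by rewrite fps_derivM !fps_deriv_exp fpsCD; ring.
- by rewrite coef_fps_mul0 !coef_fps_exp0 mulr1.
Qed.

Lemma fps_exp0 : fps_exp 0 = 1%fps.
Proof.
by apply: fpsP => -[|n]; rewrite /fps_exp /egf /fps1 ?expr0 ?fact0 ?divr1 // expr0n mul0r.
Qed.

Lemma fps_exp1_expN1 : (fps_exp 1 * fps_exp (-1))%fps = 1%fps.
Proof. by rewrite -fps_expD subrr fps_exp0. Qed.

Lemma fps_exp2 : fps_exp 2 = (fps_exp 1 * fps_exp 1)%fps.
Proof. by rewrite -fps_expD. Qed.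

Lemma fps_exp4 : fps_exp 4 = (fps_exp 2 * fps_exp 2)%fps.
Proof. by rewrite -fps_expD. Qed.

Lemma fps_scaleM a f g :
  fps_scale a (f * g)%fps = (fps_scale a f * fps_scale a g)%fps.
Proof.
apply: fpsP => n; rewrite /fps_scale /fps_mul mulr_sumr; apply: eq_bigr => i _.
have lein : (i <= n)%N by rewrite -ltnS.
by rewrite -{1}(subnKC lein) exprD mulrACA.
Qed.

Lemma fps_scaleB a f g :
  fps_scale a (f - g)%fps = (fps_scale a f - fps_scale a g)%fps.
Proof. by apply: fpsP => n; rewrite /fps_scale /fps_sub mulrBr. Qed.

Lemma fps_scale1 a : fps_scale a 1%fps = 1%fps.
Proof. by apply: fpsP => -[|n]; rewrite /fps_scale /fps1 /= ?expr0 ?mul1r ?mulr0. Qed.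

Lemma fps_scaleX a : fps_scale a fpsX = (fpsC a * fpsX)%fps.
Proof.
by apply: fpsP => -[|[|n]]; rewrite coef_fpsCM /fps_scale /fpsX /= ?mulr0 ?mulr1 ?expr1.
Qed.

Lemma fps_scale_exp a b : fps_scale a (fps_exp b) = fps_exp (a * b).
Proof. by apply: fpsP => n; rewrite /fps_scale /fps_exp /egf exprMn mulrA. Qed.

(** * Bernoulli and Euler numbers *)

Section RconsSequence.

Variables (s : nat -> seq rat) (F : nat -> rat).
Hypotheses (size_s0 : size (s 0%N) = 1%N) (sS : forall n, s n.+1 = rcons (s n) (F n)).

Lemma size_rcons_seq n : size (s n) = n.+1.
Proof. by elim: n => // n IHn; rewrite sS size_rcons IHn. Qed.

Lemma nth_rcons_seq n k : (k <= n)%N -> (s n)`_k = (s k)`_k.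
Proof.
elim: n => [|n IHn]; first by rewrite leqn0 => /eqP->.
rewrite leq_eqVlt => /predU1P[-> // | ltkn].
by rewrite sS nth_rcons size_rcons_seq ltkn IHn.
Qed.

Lemma last_rcons_seq n : (s n.+1)`_n.+1 = F n.
Proof. by rewrite sS nth_rcons size_rcons_seq ltnn eqxx. Qed.

End RconsSequence.

Lemma bernoulliS n : bernoulli n.+1 = - (n.+1`!)%:R *
  \sum_(k < n.+1) bernoulli k / (k`!)%:R / ((n.+1 - k).+1`!)%:R.
Proof.
rewrite /bernoulli (last_rcons_seq bern_seq _ erefl (fun n => erefl)); congr (_ * _).
apply: eq_bigr => k _.
by rewrite (nth_rcons_seq bern_seq _ erefl (fun n => erefl)) // -ltnS.
Qed.

Lemma eulerS n : euler n.+1 = - (n.+1`!)%:R *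
  \sum_(k < n.+1) euler k / (k`!)%:R * cosh_coef (n.+1 - k).
Proof.
rewrite /euler (last_rcons_seq euler_seq _ erefl (fun n => erefl)); congr (_ * _).
apply: eq_bigr => k _.
by rewrite (nth_rcons_seq euler_seq _ erefl (fun n => erefl)) // -ltnS.
Qed.

Lemma euler_odd n : odd n -> euler n = 0.
Proof.
elim/ltn_ind: n => -[|n] // IHn odd_n; rewrite eulerS big1 ?mulr0 // => k _.
have ltkn : (k < n.+1)%N := ltn_ord k.
case odd_k: (odd k); first by rewrite IHn ?mul0r.
by rewrite /cosh_coef oddB ?odd_k ?odd_n ?mulr0 // ltnW.
Qed.

Definition fps_bernoulli : fps := egf bernoulli.
Definition fps_euler : fps := egf euler.
Definition fps_exprel : fps := fun n => 1 / (n.+1`!)%:R.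
Definition fps_cosh : fps := cosh_coef.
Definition fps_sinh : fps := fun n => if odd n then 1 / (n`!)%:R else 0.

Lemma fps_exprel_bernoulli : (fps_exprel * fps_bernoulli)%fps = 1%fps.
Proof.
rewrite fps_mulC; apply: fpsP => -[|m].
  by rewrite coef_fps_mul0 /fps_bernoulli /egf /fps_exprel /bernoulli /fps1 /= fact0.
rewrite /fps_mul big_ord_recr /= subnn /fps_exprel /fps_bernoulli /egf.
have -> : \sum_(i < m.+1) bernoulli i / (i`!)%:R * (1 / ((m.+1 - i).+1`!)%:R)
          = - bernoulli m.+1 / (m.+1`!)%:R.
  have := natr_fact_neq0 m.+1; rewrite bernoulliS.
  under eq_bigr do rewrite mul1r; move: (\sum_(_ < _) _) => S ?.
  by field.
by rewrite /fps1 /= factS divr1 mulNr addNr.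
Qed.

Lemma fps_cosh_euler : (fps_cosh * fps_euler)%fps = 1%fps.
Proof.
rewrite fps_mulC; apply: fpsP => -[|m].
  by rewrite coef_fps_mul0 /fps_euler /egf /fps_cosh /cosh_coef /euler /= fact0.
rewrite /fps_mul big_ord_recr /= subnn /fps_cosh /fps_euler /egf.
have -> : \sum_(k < m.+1) euler k / (k`!)%:R * cosh_coef (m.+1 - k)
          = - euler m.+1 / (m.+1`!)%:R.
  have := natr_fact_neq0 m.+1; rewrite eulerS; move: (\sum_(_ < _) _) => S ?.
  by field.
by rewrite /cosh_coef /fps1 /= fact0 divr1 mulNr addNr.
Qed.

Lemma fps_exp1E : fps_exp 1 = (fps_cosh + fps_sinh)%fps.
Proof.
apply: fpsP => n; rewrite /fps_exp /egf /fps_add /fps_cosh /fps_sinh /cosh_coef.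
by rewrite expr1n; case: (odd n); rewrite ?add0r ?addr0.
Qed.

Lemma fps_expN1E : fps_exp (-1) = (fps_cosh - fps_sinh)%fps.
Proof.
apply: fpsP => n; rewrite /fps_exp /egf /fps_sub /fps_cosh /fps_sinh /cosh_coef.
by rewrite -signr_odd; case: (odd n); rewrite ?subr0 ?sub0r ?mulN1r ?mul1r.
Qed.

Lemma fps_X_exprel : (fpsX * fps_exprel)%fps = (fps_exp 1 - 1)%fps.
Proof.
apply: fpsP => -[|n]; rewrite coef_fpsXM /fps_sub /fps_exp /egf /fps1.
  by rewrite expr0 fact0 divr1 subrr.
by rewrite expr1n subr0.
Qed.

(** * The convolution integral *)

(* [beta_int i j] is the Beta integral [\int_0^1 t^i (1 - t)^j dt], so that
   [fps_iconv f g] is the convolution [\int_0^x f(t) g(x - t) dt]. *)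
Definition beta_int (i j : nat) : rat := (i`! * j`!)%:R / ((i + j).+1`!)%:R.

Definition fps_iconv (f g : fps) : fps := fun n =>
  if n is m.+1 then \sum_(i < m.+1) f i * g (m - i)%N * beta_int i (m - i) else 0.

(* [fps_mean f] is [(1/x) \int_0^x f]. *)
Definition fps_mean (f : fps) : fps := fun n => f n / n.+1%:R.

Lemma beta_intC i j : beta_int i j = beta_int j i.
Proof. by rewrite /beta_int mulnC addnC. Qed.

Lemma beta_int0n n : beta_int 0 n = 1 / n.+1%:R.
Proof.
rewrite /beta_int add0n fact0 mul1n factS natrM.
have := natr_fact_neq0 n; have : (n.+1%:R : rat) != 0 by rewrite pnatr_eq0.
move: (n.+1%:R) (n`!%:R) => x y x_neq0 y_neq0.
by field; apply/andP.
Qed.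

Lemma beta_intS i j : beta_int i j.+1 * (i + j).+2%:R = j.+1%:R * beta_int i j.
Proof.
rewrite /beta_int addnS (factS (i + j).+1) (factS j) mulnCA.
have := natr_fact_neq0 (i + j).+1; move: ((i + j).+1`!) => c.
have : ((i + j).+2%:R : rat) != 0 by rewrite pnatr_eq0.
rewrite !natrM; move: ((i + j).+2%:R) (c%:R) => x y x_neq0 y_neq0.
by field; apply/andP.
Qed.

Lemma fps_iconvDl f g h :
  fps_iconv (f + g)%fps h = (fps_iconv f h + fps_iconv g h)%fps.
Proof.
apply: fpsP => -[|n]; rewrite /fps_iconv /fps_add ?addr0 //.
by rewrite -big_split; apply: eq_bigr => i _; rewrite !mulrDl.
Qed.

Lemma fps_iconvDr f g h :
  fps_iconv h (f + g)%fps = (fps_iconv h f + fps_iconv h g)%fps.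
Proof.
apply: fpsP => -[|n]; rewrite /fps_iconv /fps_add ?addr0 //.
by rewrite -big_split; apply: eq_bigr => i _; rewrite mulrDr mulrDl.
Qed.

Lemma fps_iconvNl f g : fps_iconv (- f)%fps g = (- fps_iconv f g)%fps.
Proof.
apply: fpsP => -[|n]; rewrite /fps_iconv /fps_opp ?oppr0 //.
by rewrite -sumrN; apply: eq_bigr => i _; rewrite !mulNr.
Qed.

Lemma fps_iconvNr f g : fps_iconv g (- f)%fps = (- fps_iconv g f)%fps.
Proof.
apply: fpsP => -[|n]; rewrite /fps_iconv /fps_opp ?oppr0 //.
by rewrite -sumrN; apply: eq_bigr => i _; rewrite mulrN mulNr.
Qed.

Lemma fps_iconvCr c f g : fps_iconv f (fpsC c * g)%fps = (fpsC c * fps_iconv f g)%fps.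
Proof.
apply: fpsP => -[|n]; rewrite coef_fpsCM /fps_iconv ?mulr0 //.
rewrite mulr_sumr; apply: eq_bigr => i _; rewrite coef_fpsCM.
by rewrite mulrA [f i * c]mulrC -!mulrA.
Qed.

Lemma fps_deriv_iconv f g :
  fps_deriv (fps_iconv f g) = (f * fpsC (g 0%N) + fps_iconv f (fps_deriv g))%fps.
Proof.
apply: fpsP => -[|m]; rewrite /fps_add /fps_deriv coef_fpsMC /fps_iconv.
  by rewrite big_ord1 /beta_int /= divr1 !mulr1 addr0.
rewrite big_ord_recr /= subnn mulrDl addrC; congr (_ + _).
  by rewrite -mulrA beta_intC beta_int0n mul1r mulVf ?mulr1 ?pnatr_eq0.
rewrite mulr_suml; apply: eq_bigr => i _.
have le_im : (i <= m)%N by rewrite -ltnS.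
have -> : m.+2 = (i + (m - i)).+2 by rewrite subnKC.
by rewrite subSn // -mulrA beta_intS mulrA [f i * (_ * _)]mulrA.
Qed.

(* With [D := L g - R g] for both sides, [D' = a D + (L g' - R g')]; the
   coefficients therefore agree by induction, simultaneously for all [g]. *)
Lemma fps_exp_iconv a f g :
  (fps_exp a * fps_iconv f g = fps_iconv (fps_exp a * f) (fps_exp a * g))%fps.
Proof.
apply: fpsP => N; elim: N g => [|N IHN] g.
  by rewrite coef_fps_mul0.
pose L (g : fps) := (fps_exp a * fps_iconv f g)%fps.
pose R g := fps_iconv (fps_exp a * f)%fps (fps_exp a * g)%fps.
have L'E : fps_deriv (L g)
    = (fps_deriv (R g) + fpsC a * (L g - R g) + (L (fps_deriv g) - R (fps_deriv g)))%fps.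
  rewrite /L /R fps_derivM fps_deriv_exp !fps_deriv_iconv fps_derivM fps_deriv_exp.
  rewrite fps_iconvDr -[(fpsC a * fps_exp a * g)%fps]fps_mulA fps_iconvCr.
  rewrite coef_fps_mul0 coef_fps_exp0 mul1r.
  ring.
have := congr1 (fun h => h N) L'E.
rewrite /= /fps_add /fps_sub coef_fpsCM /L /R -!IHN !subrr mulr0 !addr0 /fps_deriv.
by move/mulIf; apply; rewrite pnatr_eq0.
Qed.

Lemma fps_iconv1l f : fps_iconv 1%fps f = (fpsX * fps_mean f)%fps.
Proof.
apply: fpsP => -[|m]; rewrite coef_fpsXM /fps_iconv //.
rewrite big_ord_recl /= subn0 big1 ?addr0; last by move=> i _; rewrite /fps1 /= !mul0r.
by rewrite /fps1 /= mul1r beta_int0n /fps_mean mul1r.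
Qed.

Lemma fps_iconv1r f : fps_iconv f 1%fps = (fpsX * fps_mean f)%fps.
Proof.
apply: fpsP => -[|m]; rewrite coef_fpsXM /fps_iconv //.
rewrite big_ord_recr /= subnn big1 ?add0r; last first.
  by move=> i _; rewrite /fps1 subn_eq0 leqNgt ltn_ord mulr0 mul0r.
by rewrite /fps1 /= mulr1 beta_intC beta_int0n /fps_mean mul1r.
Qed.

Lemma fps_iconv_egf a b :
  fps_iconv (egf a) (egf b) = (fpsX * fps_mean (egf (a * b)%fps))%fps.
Proof.
apply: fpsP => -[|m]; rewrite coef_fpsXM /fps_iconv //.
rewrite /fps_mean /egf /fps_mul !mulr_suml; apply: eq_bigr => i _.
have le_im : (i <= m)%N by rewrite -ltnS.
rewrite /beta_int subnKC // factS !natrM.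
have := natr_fact_neq0 i; have := natr_fact_neq0 (m - i); have := natr_fact_neq0 m.
have : (m.+1%:R : rat) != 0 by rewrite pnatr_eq0.
move: (i`!%:R) ((m - i)`!%:R) (m`!%:R) (m.+1%:R) => x y z t t_neq0 z_neq0 y_neq0 x_neq0.
by field; rewrite x_neq0 y_neq0 z_neq0 t_neq0.
Qed.

(** * Hyperbolic functions *)

Lemma fps_scale_exprel_bernoulli a :
  (fps_scale a fps_exprel * fps_scale a fps_bernoulli)%fps = 1%fps.
Proof. by rewrite -fps_scaleM fps_exprel_bernoulli fps_scale1. Qed.

Lemma fps_X_scale_exprel a :
  (fpsC a * fpsX * fps_scale a fps_exprel)%fps = (fps_exp a - 1)%fps.
Proof.
have := congr1 (fps_scale a) fps_X_exprel.
by rewrite fps_scaleM fps_scaleX fps_scaleB fps_scale1 fps_scale_exp mulr1.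
Qed.

Lemma fps_sinhE : ((1 + 1) * fps_sinh)%fps = (fps_exp 1 - fps_exp (-1))%fps.
Proof. by rewrite fps_exp1E fps_expN1E; ring. Qed.

Lemma fps_coshE : ((1 + 1) * fps_cosh)%fps = (fps_exp 1 + fps_exp (-1))%fps.
Proof. by rewrite fps_exp1E fps_expN1E; ring. Qed.

Definition fps_tanh : fps := (fps_sinh * fps_euler)%fps.

(* [x / sinh x = 2 x / (e^x - 1) - 2 x / (e^(2x) - 1)] *)
Definition fps_xcsch : fps :=
  (fps_bernoulli + fps_bernoulli - fps_scale 2 fps_bernoulli)%fps.

(* Multiplying by the units [exprel x], [exprel 2x] and by [2x] clears all
   denominators, leaving a polynomial identity in [e^x] and [e^(-x)] that
   holds modulo [e^x e^(-x) = 1]. *)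
Lemma fps_sinh_xcsch : (fps_sinh * fps_xcsch)%fps = fpsX.
Proof.
set E := fps_exp 1; set d2 := fps_scale 2 fps_exprel.
have b1 := fps_exprel_bernoulli; have b2 := fps_scale_exprel_bernoulli 2.
have x1 := fps_X_exprel; have x2 := fps_X_scale_exprel 2.
rewrite fpsC2 fps_exp2 -/E -/d2 in x2 b2.
apply: (fps_unit_mulI b1); apply: (fps_unit_mulI b2); apply: fps_mulXI.
apply: fps_mul2I.
transitivity (((1 + 1) * fps_sinh) *
  ((1 + 1) * fpsX * d2 * (fps_exprel * fps_bernoulli)
   - fpsX * fps_exprel * (d2 * fps_scale 2 fps_bernoulli)))%fps.
  by rewrite /fps_xcsch; ring.
transitivity ((fpsX * fps_exprel) * ((1 + 1) * fpsX * d2))%fps; last by ring.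
rewrite b1 b2 fps_sinhE x1 x2 -/E.
transitivity ((E * E - 1) * (E - 1) + (E * fps_exp (-1) - 1) * (1 - E))%fps; first by ring.
by rewrite fps_exp1_expN1; ring.
Qed.

Lemma fps_cosh_xtanh :
  (fps_cosh * (fps_scale 4 fps_bernoulli - fps_scale 2 fps_bernoulli + fpsX))%fps
  = (fpsX * fps_sinh)%fps.
Proof.
set E := fps_exp 1; set d2 := fps_scale 2 fps_exprel; set d4 := fps_scale 4 fps_exprel.
have b2 := fps_scale_exprel_bernoulli 2; have b4 := fps_scale_exprel_bernoulli 4.
have x2 := fps_X_scale_exprel 2; have x4 := fps_X_scale_exprel 4.
rewrite fpsC2 fps_exp2 -/E -/d2 in x2 b2.
have C4 : fpsC 4 = ((1 + 1) * (1 + 1))%fps by rewrite -fpsC2 -fpsCM.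
rewrite C4 fps_exp4 fps_exp2 -/E -/d4 in x4 b4.
apply: (fps_unit_mulI b2); apply: (fps_unit_mulI b4); apply: fps_mulXI.
do 4 apply: fps_mul2I.
transitivity (((1 + 1) * fps_cosh) *
  ((1 + 1) * (1 + 1) * ((1 + 1) * fpsX * d2) * (d4 * fps_scale 4 fps_bernoulli)
   - (1 + 1) * ((1 + 1) * (1 + 1) * fpsX * d4) * (d2 * fps_scale 2 fps_bernoulli)
   + ((1 + 1) * fpsX * d2) * ((1 + 1) * (1 + 1) * fpsX * d4)))%fps.
  by ring.
rewrite b2 b4 x2 x4 fps_coshE -/E.
transitivity (((1 + 1) * fps_sinh) * ((1 + 1) * fpsX * d2) *
  ((1 + 1) * (1 + 1) * fpsX * d4))%fps; last by ring.
rewrite x2 x4 fps_sinhE -/E.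
transitivity ((E - fps_exp (-1)) * ((E * E - 1) * (E * E * (E * E) - 1))
  + (1 + 1) * E * (E * E - 1) * (E * E - 1) * (E * fps_exp (-1) - 1))%fps.
  by ring.
by rewrite fps_exp1_expN1; ring.
Qed.

Lemma fps_X_tanh :
  (fpsX * fps_tanh)%fps = (fps_scale 4 fps_bernoulli - fps_scale 2 fps_bernoulli + fpsX)%fps.
Proof.
rewrite /fps_tanh -[RHS]fps_mul1 -fps_cosh_euler.
by rewrite (fps_mulC fps_cosh) -fps_mulA fps_cosh_xtanh; ring.
Qed.

(** * The Euler convolution *)

Lemma fps_exp1_euler : (fps_exp 1 * fps_euler)%fps = (1 + fps_tanh)%fps.
Proof. by rewrite fps_exp1E fps_mulDl fps_cosh_euler. Qed.

Lemma fps_expN1_euler : (fps_exp (-1) * fps_euler)%fps = (1 - fps_tanh)%fps.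
Proof. by rewrite fps_expN1E -fps_cosh_euler /fps_tanh; ring. Qed.

Lemma fps_sinh_iconv_euler :
  (fps_sinh * fps_iconv fps_euler fps_euler)%fps = ((1 + 1) * fpsX * fps_mean fps_tanh)%fps.
Proof.
apply: fps_mul2I.
transitivity (fps_exp 1 * fps_iconv fps_euler fps_euler
              - fps_exp (-1) * fps_iconv fps_euler fps_euler)%fps.
  by rewrite fps_mulA fps_sinhE; ring.
rewrite !fps_exp_iconv fps_exp1_euler fps_expN1_euler.
rewrite [(1 - _)%fps]/(1 + - _)%fps !(fps_iconvDl, fps_iconvDr, fps_iconvNl, fps_iconvNr).
by rewrite !fps_iconv1l !fps_iconv1r; ring.
Qed.

Lemma fps_iconv_euler :
  fps_iconv fps_euler fps_euler = ((1 + 1) * fps_xcsch * fps_mean fps_tanh)%fps.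
Proof.
apply: fps_mulXI; rewrite -[in LHS]fps_sinh_xcsch.
transitivity (fps_xcsch * (fps_sinh * fps_iconv fps_euler fps_euler))%fps; first by ring.
by rewrite fps_sinh_iconv_euler; ring.
Qed.

Lemma euler_convolution m :
  (euler * euler)%fps m
  = (m.+1`!)%:R * (2 * \sum_(i < m.+2) fps_xcsch i * fps_mean fps_tanh (m.+1 - i)%N).
Proof.
have := congr1 (fun h => h m.+1) fps_iconv_euler; cbv beta.
rewrite /fps_euler fps_iconv_egf coef_fpsXM -fpsC2 -fps_mulA coef_fpsCM /fps_mean /egf.
move=> <-; rewrite factS natrM; have := natr_fact_neq0 m.
have : (m.+1%:R : rat) != 0 by rewrite pnatr_eq0.
move: (m.+1%:R) (m`!%:R) => x y x_neq0 y_neq0.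
by field; apply/andP.
Qed.

Lemma fps_tanh_even n : ~~ odd n -> fps_tanh n = 0.
Proof.
move=> even_n; rewrite /fps_tanh /fps_mul big1 // => i _.
rewrite /fps_sinh; case odd_i: (odd i); last by rewrite mul0r.
rewrite /fps_euler /egf euler_odd ?mul0r ?mulr0 //.
by rewrite oddB ?odd_i ?(negbTE even_n) // -ltnS.
Qed.

Lemma coef_fps_xcsch n : fps_xcsch n = (2 - 2 ^+ n) * bernoulli n / (n`!)%:R.
Proof.
rewrite /fps_xcsch /fps_sub /fps_add /fps_scale /fps_bernoulli /egf.
by field; apply: natr_fact_neq0.
Qed.

Lemma coef_fps_tanh n : (0 < n)%N ->
  fps_tanh n = (4 ^+ n.+1 - 2 ^+ n.+1) * bernoulli n.+1 / (n.+1`!)%:R.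
Proof.
case: n => // n _; have := congr1 (fun h => h n.+2) fps_X_tanh; cbv beta.
rewrite coef_fpsXM => ->.
rewrite /fps_add /fps_sub /fps_scale /fps_bernoulli /egf /fpsX addr0.
by field; apply: natr_fact_neq0.
Qed.

Lemma sumr_even_odd (F : nat -> rat) q :
  \sum_(i < 2 * q) F i = \sum_(j < q) (F (2 * j)%N + F (2 * j).+1).
Proof.
elim: q => [|q IHq]; first by rewrite !big_ord0.
by rewrite mulnS !big_ord_recr /= IHq addrA.
Qed.

Lemma euler_convolution_even p :
  \sum_(k < p.+1) euler (2 * k) * euler (2 * p - 2 * k) = (euler * euler)%fps (2 * p).
Proof.
rewrite /fps_mul [RHS]big_ord_recr /= subnn.
rewrite (sumr_even_odd (fun i => euler i * euler (2 * p - i))) big_ord_recr /= subnn.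
congr (_ + _); apply: eq_bigr => k _.
by rewrite (euler_odd (2 * k).+1) ?mul0r ?addr0 //= oddM.
Qed.

Lemma sum_xcsch_mean_tanh p :
  \sum_(i < (2 * p).+2) fps_xcsch i * fps_mean fps_tanh ((2 * p).+1 - i)%N
  = \sum_(j < p.+1) fps_xcsch (2 * j)%N * fps_mean fps_tanh (2 * (p - j))%N.+1.
Proof.
rewrite (_ : (2 * p).+2 = 2 * p.+1)%N; last by rewrite mulnS.
rewrite (sumr_even_odd (fun i => fps_xcsch i * fps_mean fps_tanh ((2 * p).+1 - i)%N)).
apply: eq_bigr => j _; have le_jp : (j <= p)%N by rewrite -ltnS.
rewrite subSS -mulnBr {2}/fps_mean fps_tanh_even ?mul0r ?mulr0 ?addr0 ?oddM //.
by rewrite subSn ?leq_mul2l // -mulnBr.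
Qed.

Lemma natr_binomial n m : (m <= n)%N ->
  ('C(n, m))%:R = (n`!)%:R / ((m`!)%:R * ((n - m)`!)%:R) :> rat.
Proof.
move=> le_mn; rewrite -(bin_fact le_mn) !natrM mulfK //.
by rewrite mulf_neq0 ?natr_fact_neq0.
Qed.

Lemma euler_convolution_term j a :
  ((2 * (j + a)).+1`!)%:R * (2 * (fps_xcsch (2 * j)%N * fps_mean fps_tanh (2 * a)%N.+1))
  = 2 / (j + a).+1%:R * (bernoulli (2 * a.+1) * bernoulli (2 * j) / a.+1%:R
     * (2 ^+ (2 * a.+1) - 1) * 2 ^+ (2 * a.+1 - 1)
     * (1 - (2 : rat) ^ ((2 * j)%:Z - 1)) * ('C(2 * (j + a).+1, 2 * a.+1))%:R).
Proof.
rewrite coef_fps_xcsch /fps_mean coef_fps_tanh // natr_binomial; last by lia.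
rewrite expfzDr // exprN1 -exprnP.
have -> : (2 * a.+1 - 1 = (2 * a).+1)%N by rewrite mulnS.
have -> : (2 * (j + a).+1 - 2 * a.+1 = 2 * j)%N by rewrite -mulnBr subSS addnK.
have -> : (2 * a.+1 = (2 * a).+2)%N by lia.
have -> : (2 * (j + a).+1 = (2 * (j + a)).+2)%N by lia.
rewrite (_ : 4 = 2 * 2) // exprMn (factS (2 * (j + a)).+1) natrM !exprS.
have -> : ((2 * (j + a)).+2%:R : rat) = 2 * (j + a).+1%:R by rewrite -natrM; congr _%:R; lia.
have -> : ((2 * a).+2%:R : rat) = 2 * a.+1%:R by rewrite -natrM; congr _%:R; lia.
have := natr_fact_neq0 (2 * a).+2; have := natr_fact_neq0 (2 * j).
have : ((j + a).+1%:R : rat) != 0 by rewrite pnatr_eq0.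
have : (a.+1%:R : rat) != 0 by rewrite pnatr_eq0.
move: ((2 * a).+2`!%:R) ((2 * j)`!%:R) ((j + a).+1%:R) (a.+1%:R).
move=> x y P A A_neq0 P_neq0 y_neq0 x_neq0.
by field; rewrite x_neq0 y_neq0 P_neq0 A_neq0.
Qed.

Theorem mainTheorem13 (n : nat) (hn : (1 <= n)%N) :
  \sum_(1 <= k < n.+1) euler (2 * k - 2) * euler (2 * n - 2 * k)
  = 2 / n%:R * \sum_(1 <= k < n.+1)
      bernoulli (2 * k) * bernoulli (2 * n - 2 * k) / k%:R
      * (2 ^+ (2 * k) - 1) * 2 ^+ (2 * k - 1)
      * (1 - (2 : rat) ^ ((2 * n - 2 * k)%:Z - 1))
      * ('C(2 * n, 2 * k))%:R.
Proof.
case: n hn => // p _; rewrite !big_add1 /= !big_mkord.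
rewrite (eq_bigr (fun k : 'I_p.+1 => euler (2 * k) * euler (2 * p - 2 * k))); last first.
  by move=> k _; congr (euler _ * euler _); lia.
rewrite euler_convolution_even euler_convolution sum_xcsch_mean_tanh.
rewrite (reindex_inj rev_ord_inj) /= !mulr_sumr; apply: eq_bigr => -[a le_ap] _ /=.
have [j ->] : exists j, p = (j + a)%N by exists (p - a)%N; lia.
rewrite subSS addnK addKn (_ : 2 * (j + a).+1 - 2 * a.+1 = 2 * j)%N; last by lia.
exact: euler_convolution_term.
Qed.
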